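(* Let $A$ be a finite nonempty set of actions and $\boldsymbol{v}^0,\boldsymbol{v}^1,\dots\in\mathbb{R}^{|A|}$ an arbitrary sequence of value vectors. If $\boldsymbol{\sigma}^0,\boldsymbol{\sigma}^1,\dots$ is the sequence of regret-matching policies, or the sequence of regret-matching$^+$ policies, generated from $\boldsymbol{v}^0,\boldsymbol{v}^1,\dots$, then for all $t\ge 0$, $$\boldsymbol{\sigma}^{t+1}\cdot\boldsymbol{v}^t\ge\boldsymbol{\sigma}^t\cdot\boldsymbol{v}^t.$$
   Context: For $x\in\mathbb{R}$, $x^+:=\max(x,0)$, applied componentwise to vectors. Define $\boldsymbol{\sigma}_{\mathrm{rm}}(\boldsymbol{x}):=\boldsymbol{x}^+/(\boldsymbol{1}\cdot\boldsymbol{x}^+)$ if some $x_a>0$, and $\boldsymbol{1}/|A|$ otherwise. Regret-matching: $\boldsymbol{r}^0=\boldsymbol{0}$, $\boldsymbol{\sigma}^t=\boldsymbol{\sigma}_{\mathrm{rm}}(\boldsymbol{r}^t)$, $\boldsymbol{r}^{t+1}=\boldsymbol{r}^t+\boldsymbol{v}^t-(\boldsymbol{\sigma}^t\cdot\boldsymbol{v}^t)\boldsymbol{1}$. Regret-matching$^+$: $\boldsymbol{q}^0=\boldsymbol{0}$, $\boldsymbol{\sigma}^t=\boldsymbol{\sigma}_{\mathrm{rm}}(\boldsymbol{q}^t)$, $\boldsymbol{q}^{t+1}=\bigl(\boldsymbol{q}^t+\boldsymbol{v}^t-(\boldsymbol{\sigma}^t\cdot\boldsymbol{v}^t)\boldsymbol{1}\bigr)^+$.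 *)

From mathcomp Require Import all_boot all_order all_algebra.
Set Implicit Arguments. Unset Strict Implicit. Unset Printing Implicit Defensive.
Import Order.TTheory GRing.Theory Num.Theory.
Local Open Scope ring_scope.

Section RM.
Variables (R : realFieldType) (A : finType).

Definition pos_part (x : R) : R := Num.max x 0.

Definition dot (x y : A -> R) : R := \sum_(a : A) x a * y a.

Definition sigma_rm (x : A -> R) : A -> R :=
  if [exists a, 0 < x a]
  then fun a => pos_part (x a) / (\sum_(b : A) pos_part (x b))
  else fun _ => (#|A|%:R)^-1.

Fixpoint rm_regret (v : nat -> A -> R) (t : nat) : A -> R :=
  match t with
  | 0 => fun _ => 0
  | t'.+1 => let r := rm_regret v t' in
             fun a => r a + v t' a - dot (sigma_rm r) (v t')
  end.

Definition rm_policy (v : nat -> A -> R) (t : nat) : A -> R :=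
  sigma_rm (rm_regret v t).

Fixpoint rmp_regret (v : nat -> A -> R) (t : nat) : A -> R :=
  match t with
  | 0 => fun _ => 0
  | t'.+1 => let q := rmp_regret v t' in
             fun a => pos_part (q a + v t' a - dot (sigma_rm q) (v t'))
  end.

Definition rmp_policy (v : nat -> A -> R) (t : nat) : A -> R :=
  sigma_rm (rmp_regret v t).

End RM.

From mathcomp Require Import all_boot all_order all_algebra.
From mathcomp Require Import lra.
Import Order.TTheory GRing.Theory Num.Theory.
Local Open Scope ring_scope.

(* Write x for the regrets, c = sigma_rm(x).v for the current value and
   w = v - c1 for the instantaneous regrets, so that the updated regrets are
   y = x + w.  Regret matching is chosen so that x^+ . w = 0 (Blackwell's
   condition), and since s |-> s^+ is nondecreasing, (y_a^+ - x_a^+) w_a >= 0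
   for every a; hence y^+ . w >= 0.  As sigma_rm(y) is a probability vector
   proportional to y^+, this says sigma_rm(y).v >= c.  If y has no positive
   entry, neither has x (otherwise x^+ . w < 0), and both policies are
   uniform.  For regret-matching+ only y^+ replaces y, which leaves sigma_rm
   unchanged. *)

Lemma homo_mul_subr_ge0 (R : realDomainType) (f : R -> R) :
  {homo f : s1 s2 / s1 <= s2} -> forall s1 s2, 0 <= (f s2 - f s1) * (s2 - s1).
Proof.
move=> f_homo s1 s2; case: (leP s1 s2) => s12.
  by rewrite mulr_ge0 // subr_ge0 // f_homo.
by rewrite mulr_le0 // subr_le0 // ?f_homo // ltW.
Qed.

Section RegretMatchingStep.
Variables (R : realFieldType) (A : finType).
Implicit Types (s : R) (x v : A -> R).

Lemma pos_part_ge0 s : 0 <= pos_part s.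
Proof. by rewrite /pos_part le_max lexx orbT. Qed.

Lemma pos_part_id s : 0 <= s -> pos_part s = s.
Proof. exact: max_l. Qed.

Lemma pos_part_eq0 s : s <= 0 -> pos_part s = 0.
Proof. exact: max_r. Qed.

Lemma pos_part_gt0 s : (0 < pos_part s) = (0 < s).
Proof. by rewrite /pos_part lt_max ltxx orbF. Qed.

Lemma pos_part_idem s : pos_part (pos_part s) = pos_part s.
Proof. exact/pos_part_id/pos_part_ge0. Qed.

Lemma le_pos_part : {homo @pos_part R : s1 s2 / s1 <= s2}.
Proof. by move=> s1 s2 s12; apply: le_max2. Qed.

Definition pos_partv x : A -> R := fun a => pos_part (x a).

Definition rm_step x v : A -> R := fun a => x a + v a - dot (sigma_rm x) v.

Lemma rm_regretS (v : nat -> A -> R) t :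
  rm_regret v t.+1 = rm_step (rm_regret v t) (v t).
Proof. by []. Qed.

Lemma rmp_regretS (v : nat -> A -> R) t :
  rmp_regret v t.+1 = pos_partv (rm_step (rmp_regret v t) (v t)).
Proof. by []. Qed.

Lemma dot_subr_const x v (c : R) :
  dot x (fun a => v a - c) = dot x v - c * \sum_a x a.
Proof.
rewrite /dot mulr_sumr -sumrB; apply: eq_bigr => a _.
by rewrite mulrBr [c * _]mulrC.
Qed.

Lemma sum_pos_part_gt0 x : [exists a, 0 < x a] -> 0 < \sum_a pos_part (x a).
Proof.
case/existsP=> b xb; rewrite (bigD1 b) //= ltr_wpDr ?pos_part_gt0 //.
by apply: sumr_ge0 => a _; apply: pos_part_ge0.
Qed.

Lemma dot_sigma_rm_pos x v : [exists a, 0 < x a] ->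
  dot (sigma_rm x) v = dot (pos_partv x) v / \sum_a pos_part (x a).
Proof.
rewrite /sigma_rm => ->; rewrite /dot mulr_suml.
by apply: eq_bigr => a _; rewrite mulrAC.
Qed.

Lemma sigma_rm_pos_part x a : sigma_rm (pos_partv x) a = sigma_rm x a.
Proof.
have posP : [exists b, 0 < pos_partv x b] = [exists b, 0 < x b].
  by apply: eq_existsb => b; rewrite /pos_partv pos_part_gt0.
rewrite /sigma_rm posP /pos_partv; case: ifP => // _.
by rewrite pos_part_idem; under eq_bigr do rewrite pos_part_idem.
Qed.

Lemma dot_sigma_rm_pos_part x v :
  dot (sigma_rm (pos_partv x)) v = dot (sigma_rm x) v.
Proof. by apply: eq_bigr => a _; rewrite sigma_rm_pos_part. Qed.

Lemma sum_sigma_rm (a0 : A) x : \sum_a sigma_rm x a = 1.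
Proof.
rewrite /sigma_rm; case: ifP => [/sum_pos_part_gt0 S_gt0 | _].
  by rewrite -mulr_suml divff // gt_eqF.
have A_gt0 : (0 < #|A|)%N by apply/card_gt0P; exists a0.
by rewrite sumr_const -[_^-1 *+ _]mulr_natr mulVf // pnatr_eq0 -lt0n.
Qed.

Lemma dot_sigma_rm_subr (a0 : A) x v (c : R) :
  dot (sigma_rm x) (fun a => v a - c) = dot (sigma_rm x) v - c.
Proof. by rewrite dot_subr_const (sum_sigma_rm a0) mulr1. Qed.

Lemma blackwell_condition x v :
  dot (pos_partv x) (fun a => v a - dot (sigma_rm x) v) = 0.
Proof.
case: (boolP [exists a, 0 < x a]) => [x_pos | /existsPn x_npos].
  rewrite dot_subr_const (dot_sigma_rm_pos _ _ x_pos) divfK ?subrr //.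
  by rewrite gt_eqF ?sum_pos_part_gt0.
apply: big1 => a _; rewrite /pos_partv pos_part_eq0 ?mul0r //.
by rewrite leNgt x_npos.
Qed.

Lemma dot_pos_part_rm_step_ge0 x v :
  0 <= dot (pos_partv (rm_step x v)) (fun a => v a - dot (sigma_rm x) v).
Proof.
rewrite -[X in _ <= X]subr0 -{2}(blackwell_condition x v) /dot -sumrB.
apply: sumr_ge0 => a _; rewrite -mulrBl.
have -> : v a - dot (sigma_rm x) v = rm_step x v a - x a.
  by rewrite /rm_step addrAC [x a + _]addrC addrK.
exact: homo_mul_subr_ge0 le_pos_part _ _.
Qed.

Lemma rm_step_npos x v :
  ~~ [exists a, 0 < rm_step x v a] -> ~~ [exists a, 0 < x a].
Proof.
set c := dot (sigma_rm x) v => /existsPn step_npos.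
have step_le0 a : x a + v a - c <= 0 by rewrite leNgt; apply: step_npos.
apply/existsP => -[b xb]; move: (blackwell_condition x v); rewrite -/c.
apply/eqP; rewrite lt_eqF // /dot /pos_partv (bigD1 b) //=.
have rest_le0 : \sum_(a | a != b) pos_part (x a) * (v a - c) <= 0.
  rewrite -oppr_ge0 -sumrN; apply: sumr_ge0 => a _; rewrite oppr_ge0.
  have := step_le0 a; case: (ltP 0 (x a)) => xa ya.
    by rewrite (pos_part_id _ (ltW xa)); nra.
  by rewrite pos_part_eq0 ?mul0r.
have : x b * (v b - c) < 0 by have := step_le0 b; rewrite pmulr_rlt0 //; lra.
rewrite (pos_part_id _ (ltW xb)); lra.
Qed.

Lemma dot_sigma_rm_step (a0 : A) x v :
  dot (sigma_rm x) v <= dot (sigma_rm (rm_step x v)) v.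
Proof.
case: (boolP [exists a, 0 < rm_step x v a]) => [y_pos | y_npos].
  rewrite -subr_ge0 -(dot_sigma_rm_subr a0) (dot_sigma_rm_pos _ _ y_pos).
  by rewrite divr_ge0 ?dot_pos_part_rm_step_ge0 ?ltW ?sum_pos_part_gt0.
have x_npos := rm_step_npos _ _ y_npos.
by rewrite /sigma_rm (negbTE x_npos) (negbTE y_npos).
Qed.

End RegretMatchingStep.

Theorem theorem2 (R : realFieldType) (A : finType) (a0 : A)
    (v : nat -> A -> R) (t : nat) :
  dot (rm_policy v t) (v t) <= dot (rm_policy v t.+1) (v t) /\
  dot (rmp_policy v t) (v t) <= dot (rmp_policy v t.+1) (v t).
Proof.
split; rewrite /rm_policy /rmp_policy.
  by rewrite rm_regretS; apply: dot_sigma_rm_step.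
by rewrite rmp_regretS dot_sigma_rm_pos_part; apply: dot_sigma_rm_step.
Qed.
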